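(* Fix parameters and a population size vector $\mathbf m$ as in the context, with Assumption (A), and suppose $c_P\ge\Delta L\cdot\tau_{DA}$. Then for any $K\in\mathbb N$ and $\beta_{IA}\in(0,1]$, any Nash equilibrium $\mathbf x^\star$ of the population game with parameters $(K,\beta_{IA})$, and the minimizer $\mathbf y^\star$ of $\overline{SC}$ over $\mathcal Y$ (for the same $K,\beta_{IA}$), $$\frac{SC(\mathbf x^\star)}{\overline{SC}(\mathbf y^\star)}\le 1+d_{\rm avg}\cdot e_{\max}(\mathbf m,K,\beta_{IA}),\qquad e_{\max}(\mathbf m,K,\beta_{IA})=\beta_{IA}\,p_U^i\sum_{k=0}^{K-1}\Big(\frac{\beta_{IA}\,p_U^i}{d_{\rm avg}}\sum_{d\in\mathcal D}d(d-1)m_d\Big)^k.$$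
   Context: Let $D_{\max}\in\mathbb N$, $\mathcal D=\{1,\dots,D_{\max}\}$, $\mathcal A=\{I,N,P\}$. A population size vector is $\mathbf m=(m_d)_{d\in\mathcal D}$ with $m_d>0$, $\sum_d m_d=1$; $d_{\rm avg}=\sum_d d\,m_d$. A social state is $\mathbf x=(x_{d,a})$ with $x_{d,a}\ge0$, $\sum_a x_{d,a}=m_d$. Parameters: $\tau_{DA}\in(0,1]$; $0\le L_P<L_U$, $\Delta L=L_U-L_P$; $0\le p_P^i<p_U^i\le1$; $\beta_{IA}\in(0,1]$; $K\in\mathbb N$; $c_P,c_I\ge0$; $\xi_{\rm cov}\in(0,1]$, $ded\ge0$, $Cov_{\max}\ge0$. Define $w_d=d\,m_d/\sum_{d'}d'm_{d'}$, $g_{d,a}=x_{d,a}/m_d$, $g_{d,U}=g_{d,N}+g_{d,I}$, $\gamma(\mathbf x)=\beta_{IA}\sum_d w_d(g_{d,P}p_P^i+g_{d,U}p_U^i)$, $\lambda(\mathbf x)=\beta_{IA}\sum_d w_d(d-1)(g_{d,P}p_P^i+g_{d,U}p_U^i)$, $e(\mathbf x)=\gamma(\mathbf x)\sum_{k=1}^K\lambda(\mathbf x)^{k-1}$. Costs: $C_{d,P}(\mathbf x)=\tau_{DA}(1+d\,e(\mathbf x))L_P+c_P$, $C_{d,N}(\mathbf x)=\tau_{DA}(1+d\,e(\mathbf x))L_U$, $C_{d,I}(\mathbf x)=C_{d,N}(\mathbf x)+c_I-\min\big(Cov_{\max},\xi_{\rm cov}\max(0,C_{d,N}(\mathbf x)-ded)\big)$.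 A Nash equilibrium is a social state $\mathbf x^\star$ such that $x^\star_{d,a}>0$ implies $C_{d,a}(\mathbf x^\star)=\min_{a'\in\mathcal A}C_{d,a'}(\mathbf x^\star)$. Social cost of a social state: $SC(\mathbf x)=\sum_d\big(x_{d,P}C_{d,P}(\mathbf x)+(m_d-x_{d,P})C_{d,N}(\mathbf x)\big)$. Let $\mathcal Y=\prod_d[0,m_d]$, $\mathbf X(\mathbf y)$ the social state with $X_{d,P}=y_d$, $X_{d,N}=m_d-y_d$, $X_{d,I}=0$, and $\overline{SC}(\mathbf y)=SC(\mathbf X(\mathbf y))$; this has a unique minimizer $\mathbf y^\star$ over $\mathcal Y$. Assumption (A): $L_P<(1-\xi_{\rm cov})L_U$ and $c_P>c_I+ded$. *)

From Stdlib Require Import Reals.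
Open Scope R_scope.

(* Actions: I (insure), N (nothing), P (protect). *)
Inductive Act := ActI | ActN | ActP.

Fixpoint sumD (n : nat) (f : nat -> R) : R :=
  match n with
  | O => 0
  | S n' => sumD n' f + f n
  end.

Fixpoint geom (K : nat) (l : R) : R :=
  match K with
  | O => 0
  | S K' => geom K' l + l ^ K'
  end.

Definition inD (Dmax d : nat) : Prop := (1 <= d <= Dmax)%nat.

Definition pop_size (Dmax : nat) (m : nat -> R) : Prop :=
  (forall d, inD Dmax d -> 0 < m d) /\ sumD Dmax m = 1.

Definition d_avg (Dmax : nat) (m : nat -> R) : R := sumD Dmax (fun d => INR d * m d).

Definition social_state (Dmax : nat) (m : nat -> R) (x : nat -> Act -> R) : Prop :=
  forall d, inD Dmax d ->
    (forall a, 0 <= x d a) /\ x d ActI + x d ActN + x d ActP = m d.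

Definition wgt (Dmax : nat) (m : nat -> R) (d : nat) : R := INR d * m d / d_avg Dmax m.

Definition gfrac (m : nat -> R) (x : nat -> Act -> R) (d : nat) (a : Act) : R := x d a / m d.

Definition inf_term (pP pU : R) (m : nat -> R) (x : nat -> Act -> R) (d : nat) : R :=
  gfrac m x d ActP * pP + (gfrac m x d ActN + gfrac m x d ActI) * pU.

Definition gammaf (Dmax : nat) (m : nat -> R) (beta pP pU : R) (x : nat -> Act -> R) : R :=
  beta * sumD Dmax (fun d => wgt Dmax m d * inf_term pP pU m x d).

Definition lambdaf (Dmax : nat) (m : nat -> R) (beta pP pU : R) (x : nat -> Act -> R) : R :=
  beta * sumD Dmax (fun d => wgt Dmax m d * (INR d - 1) * inf_term pP pU m x d).

Definition ef (Dmax : nat) (m : nat -> R) (beta pP pU : R) (K : nat) (x : nat -> Act -> R) : R :=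
  gammaf Dmax m beta pP pU x * geom K (lambdaf Dmax m beta pP pU x).

(* Costs C_{d,a}(x); e is passed as the value e(x). *)
Definition costP (tau LP cP e : R) (d : nat) : R := tau * (1 + INR d * e) * LP + cP.
Definition costN (tau LU e : R) (d : nat) : R := tau * (1 + INR d * e) * LU.
Definition costI (tau LU cI xi ded Covmax e : R) (d : nat) : R :=
  costN tau LU e d + cI - Rmin Covmax (xi * Rmax 0 (costN tau LU e d - ded)).

Definition cost (Dmax : nat) (m : nat -> R) (tau LP LU pP pU beta : R) (K : nat)
  (cP cI xi ded Covmax : R) (x : nat -> Act -> R) (d : nat) (a : Act) : R :=
  let e := ef Dmax m beta pP pU K x in
  match a with
  | ActP => costP tau LP cP e d
  | ActN => costN tau LU e d
  | ActI => costI tau LU cI xi ded Covmax e d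
  end.

Definition nash_eq (Dmax : nat) (m : nat -> R) (tau LP LU pP pU beta : R) (K : nat)
  (cP cI xi ded Covmax : R) (x : nat -> Act -> R) : Prop :=
  social_state Dmax m x /\
  forall d, inD Dmax d -> forall a, 0 < x d a ->
    forall a', cost Dmax m tau LP LU pP pU beta K cP cI xi ded Covmax x d a
               <= cost Dmax m tau LP LU pP pU beta K cP cI xi ded Covmax x d a'.

Definition SC (Dmax : nat) (m : nat -> R) (tau LP LU pP pU beta : R) (K : nat)
  (cP : R) (x : nat -> Act -> R) : R :=
  let e := ef Dmax m beta pP pU K x in
  sumD Dmax (fun d => x d ActP * costP tau LP cP e d + (m d - x d ActP) * costN tau LU e d).

Definition in_Y (Dmax : nat) (m : nat -> R) (y : nat -> R) : Prop :=
  forall d, inD Dmax d -> 0 <= y d <= m d.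

Definition Xof (m : nat -> R) (y : nat -> R) : nat -> Act -> R :=
  fun d a => match a with ActP => y d | ActN => m d - y d | ActI => 0 end.

Definition SCbar (Dmax : nat) (m : nat -> R) (tau LP LU pP pU beta : R) (K : nat)
  (cP : R) (y : nat -> R) : R :=
  SC Dmax m tau LP LU pP pU beta K cP (Xof m y).

Definition e_max (Dmax : nat) (m : nat -> R) (K : nat) (beta pU : R) : R :=
  beta * pU * geom K (beta * pU / d_avg Dmax m *
                      sumD Dmax (fun d => INR d * (INR d - 1) * m d)).

From Stdlib Require Import Reals Lra Lia.
Open Scope R_scope.

(* At an equilibrium protection is never worse than doing nothing, so every
   player pays at most the no-protection cost tau L_U (1 + d e(x_star)), which sums
   to tau L_U (1 + d_avg e(x_star)) with e(x_star) <= e_max because every infection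
   term is at most p_U.  Conversely, as c_P >= tau (L_U - L_P), each of the two
   costs is at least tau L_U, so every state in Y has social cost at least
   tau L_U. *)

Lemma sumD_le n f g :
  (forall d, (1 <= d <= n)%nat -> f d <= g d) -> sumD n f <= sumD n g.
Proof.
  induction n as [|n IH]; simpl; intros H; [lra|].
  apply Rplus_le_compat; [apply IH; intros; apply H|apply H]; lia.
Qed.

Lemma sumD_ext n f g :
  (forall d, (1 <= d <= n)%nat -> f d = g d) -> sumD n f = sumD n g.
Proof.
  induction n as [|n IH]; simpl; intros H; [reflexivity|].
  f_equal; [apply IH; intros; apply H|apply H]; lia.
Qed.

Lemma sumD_plus n f g : sumD n (fun d => f d + g d) = sumD n f + sumD n g.
Proof. induction n as [|n IH]; simpl; [lra|]. rewrite IH; ring. Qed.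

Lemma sumD_scal n c f : sumD n (fun d => c * f d) = c * sumD n f.
Proof. induction n as [|n IH]; simpl; [lra|]. rewrite IH; ring. Qed.

Lemma sumD_nonneg n f :
  (forall d, (1 <= d <= n)%nat -> 0 <= f d) -> 0 <= sumD n f.
Proof.
  induction n as [|n IH]; simpl; intros H; [lra|].
  assert (0 <= sumD n f) by (apply IH; intros; apply H; lia).
  pose proof (H (S n) ltac:(lia)); lra.
Qed.

Lemma geom_nonneg K l : 0 <= l -> 0 <= geom K l.
Proof.
  intros Hl; induction K as [|K IH]; simpl; [lra|].
  pose proof (pow_le l K Hl); lra.
Qed.

Lemma geom_le K l l' : 0 <= l <= l' -> geom K l <= geom K l'.
Proof.
  intros Hl; induction K as [|K IH]; simpl; [lra|].
  pose proof (pow_incr l l' K Hl); lra.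
Qed.

Lemma INR_pred_nonneg Dmax d : inD Dmax d -> 0 <= INR d - 1.
Proof. intros Hd. assert (1 <= INR d) by (apply (le_INR 1); unfold inD in Hd; lia). lra. Qed.

Section Population.

Variables (Dmax : nat) (m : nat -> R).
Hypothesis Hm : pop_size Dmax m.

Lemma d_avg_ge1 : 1 <= d_avg Dmax m.
Proof.
  destruct Hm as [Hpos Hsum]. unfold d_avg. rewrite <- Hsum.
  apply sumD_le. intros d Hd.
  assert (1 <= INR d) by (apply (le_INR 1); lia).
  specialize (Hpos d Hd). nra.
Qed.

Lemma wgt_nonneg d : inD Dmax d -> 0 <= wgt Dmax m d.
Proof.
  intros Hd. pose proof d_avg_ge1. pose proof (proj1 Hm d Hd).
  pose proof (pos_INR d). unfold wgt, Rdiv.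
  apply Rmult_le_pos; [nra|]. left; apply Rinv_0_lt_compat; lra.
Qed.

Lemma sumD_wgt : sumD Dmax (wgt Dmax m) = 1.
Proof.
  pose proof d_avg_ge1.
  transitivity (sumD Dmax (fun d => / d_avg Dmax m * (INR d * m d))).
  - apply sumD_ext. intros; unfold wgt, Rdiv; ring.
  - rewrite sumD_scal. fold (d_avg Dmax m). field. lra.
Qed.

Lemma wgt_average_bounds (u : nat -> R) (c : R) :
  (forall d, inD Dmax d -> 0 <= u d <= c) ->
  0 <= sumD Dmax (fun d => wgt Dmax m d * u d) <= c.
Proof.
  intros Hu. split.
  - apply sumD_nonneg. intros d Hd.
    pose proof (Hu d Hd). pose proof (wgt_nonneg d Hd). nra.
  - rewrite <- (Rmult_1_r c), <- sumD_wgt, <- sumD_scal.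
    apply sumD_le. intros d Hd.
    pose proof (Hu d Hd). pose proof (wgt_nonneg d Hd). nra.
Qed.

Lemma Xof_social_state y : in_Y Dmax m y -> social_state Dmax m (Xof m y).
Proof.
  intros Hy d Hd. specialize (Hy d Hd). split.
  - intros []; simpl; lra.
  - simpl; lra.
Qed.

Section Infection.

Variables (beta pP pU : R) (x : nat -> Act -> R).
Hypotheses (Hbeta : 0 <= beta) (HpPU : 0 <= pP <= pU).
Hypothesis Hx : social_state Dmax m x.

(* The fractions g_{d,P}, g_{d,U} are nonnegative and sum to 1, so the
   infection term is a convex combination of p_P and p_U. *)
Lemma inf_term_bounds d : inD Dmax d -> 0 <= inf_term pP pU m x d <= pU.
Proof.
  intros Hd. destruct (Hx d Hd) as [Hnn Hsum]. pose proof (proj1 Hm d Hd).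
  unfold inf_term, gfrac.
  assert (Hg : forall a, 0 <= x d a / m d).
  { intros a. unfold Rdiv. apply Rmult_le_pos; [apply Hnn|].
    left; apply Rinv_0_lt_compat; lra. }
  assert (Hone : x d ActP / m d + (x d ActN / m d + x d ActI / m d) = 1).
  { rewrite <- (Rdiv_diag (m d)) by lra. rewrite <- Hsum. field. lra. }
  pose proof (Hg ActP). pose proof (Hg ActN). pose proof (Hg ActI).
  split; nra.
Qed.

Lemma gammaf_bounds : 0 <= gammaf Dmax m beta pP pU x <= beta * pU.
Proof.
  pose proof (wgt_average_bounds _ _ inf_term_bounds).
  unfold gammaf. split; nra.
Qed.

Lemma lambdaf_bounds :
  0 <= lambdaf Dmax m beta pP pU x
    <= beta * pU / d_avg Dmax m * sumD Dmax (fun d => INR d * (INR d - 1) * m d).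
Proof.
  pose proof d_avg_ge1.
  assert (Hsum : 0 <= sumD Dmax (fun d => wgt Dmax m d * (INR d - 1) * inf_term pP pU m x d)
     <= pU / d_avg Dmax m * sumD Dmax (fun d => INR d * (INR d - 1) * m d)).
  { rewrite <- sumD_scal. split.
    - apply sumD_nonneg. intros d Hd.
      pose proof (inf_term_bounds d Hd). pose proof (wgt_nonneg d Hd).
      pose proof (INR_pred_nonneg Dmax d Hd).
      apply Rmult_le_pos; [apply Rmult_le_pos|]; lra.
    - apply sumD_le. intros d Hd.
      pose proof (inf_term_bounds d Hd). pose proof (wgt_nonneg d Hd).
      pose proof (INR_pred_nonneg Dmax d Hd).
      replace (pU / d_avg Dmax m * (INR d * (INR d - 1) * m d))
        with (wgt Dmax m d * (INR d - 1) * pU) by (unfold wgt; field; lra).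
      apply Rmult_le_compat_l; [apply Rmult_le_pos|]; lra. }
  unfold lambdaf, Rdiv in *. rewrite !Rmult_assoc.
  split; [|apply Rmult_le_compat_l]; nra.
Qed.

Lemma ef_bounds K : 0 <= ef Dmax m beta pP pU K x <= e_max Dmax m K beta pU.
Proof.
  pose proof gammaf_bounds. pose proof lambdaf_bounds.
  pose proof (geom_nonneg K _ (proj1 lambdaf_bounds)).
  unfold ef, e_max. split.
  - apply Rmult_le_pos; lra.
  - apply Rmult_le_compat; try lra. apply geom_le. lra.
Qed.

End Infection.

Section SocialCost.

Variables (tau LP LU pP pU beta cP : R) (K : nat).

Lemma SC_nash_le cI xi ded Covmax x :
  nash_eq Dmax m tau LP LU pP pU beta K cP cI xi ded Covmax x ->
  SC Dmax m tau LP LU pP pU beta K cP x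
    <= tau * LU * (1 + d_avg Dmax m * ef Dmax m beta pP pU K x).
Proof.
  intros [Hx Hnash]. unfold SC; cbv zeta.
  set (e := ef Dmax m beta pP pU K x).
  apply Rle_trans with (sumD Dmax (fun d => tau * LU * m d + tau * LU * e * (INR d * m d))).
  - apply sumD_le. intros d Hd. destruct (Hx d Hd) as [Hnn _].
    assert (HPN : x d ActP * costP tau LP cP e d <= x d ActP * costN tau LU e d).
    { destruct (Rle_lt_or_eq_dec 0 (x d ActP) (Hnn ActP)) as [Hlt|Heq].
      - apply Rmult_le_compat_l; [lra|]. exact (Hnash d Hd ActP Hlt ActN).
      - rewrite <- Heq; lra. }
    unfold costN in *. nra.
  - rewrite sumD_plus, !sumD_scal, (proj2 Hm). fold (d_avg Dmax m). lra.
Qed.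

Hypotheses (Htau : 0 < tau) (HLP : 0 <= LP) (HLU : 0 <= LU).
Hypotheses (Hbeta : 0 <= beta) (HpPU : 0 <= pP <= pU).
Hypothesis HcP : tau * LU <= tau * LP + cP.

Lemma SCbar_ge y : in_Y Dmax m y -> tau * LU <= SCbar Dmax m tau LP LU pP pU beta K cP y.
Proof.
  intros Hy. unfold SCbar, SC; cbv zeta.
  pose proof (proj1 (ef_bounds _ _ _ _ Hbeta HpPU (Xof_social_state y Hy) K)) as He.
  set (e := ef Dmax m beta pP pU K (Xof m y)) in *.
  apply Rle_trans with (sumD Dmax (fun d => tau * LU * m d)).
  - rewrite sumD_scal, (proj2 Hm). lra.
  - apply sumD_le. intros d Hd. specialize (Hy d Hd). simpl. unfold costP, costN.
    assert (Hq : 0 <= tau * (INR d * e)) by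
      (apply Rmult_le_pos; [lra|apply Rmult_le_pos; [apply pos_INR|lra]]).
    assert (HP : tau * LU <= tau * (1 + INR d * e) * LP + cP) by nra.
    assert (HN : tau * LU <= tau * (1 + INR d * e) * LU) by nra.
    nra.
Qed.

End SocialCost.

End Population.

Lemma Rdiv_le_of_le_mul a b c k :
  0 < c -> 0 <= k -> a <= c * k -> c <= b -> a / b <= k.
Proof.
  intros Hc Hk Ha Hb. apply Rmult_le_reg_r with b; [lra|].
  unfold Rdiv. rewrite Rmult_assoc, Rinv_l by lra. nra.
Qed.

Theorem theorem7
  (Dmax : nat) (m : nat -> R)
  (tau LP LU pP pU cP cI xi ded Covmax : R)
  (Hm : pop_size Dmax m)
  (Htau : 0 < tau <= 1)
  (HL : 0 <= LP < LU)
  (HpP : 0 <= pP) (Hp : pP < pU) (HpU : pU <= 1)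
  (HcP : 0 <= cP) (HcI : 0 <= cI)
  (Hxi : 0 < xi <= 1) (Hded : 0 <= ded) (HCov : 0 <= Covmax)
  (HA1 : LP < (1 - xi) * LU) (HA2 : cP > cI + ded)
  (HcPL : cP >= (LU - LP) * tau) :
  forall (K : nat) (beta : R), (1 <= K)%nat -> 0 < beta <= 1 ->
  forall (xstar : nat -> Act -> R) (ystar : nat -> R),
    nash_eq Dmax m tau LP LU pP pU beta K cP cI xi ded Covmax xstar ->
    in_Y Dmax m ystar ->
    (forall y, in_Y Dmax m y ->
       SCbar Dmax m tau LP LU pP pU beta K cP ystar
       <= SCbar Dmax m tau LP LU pP pU beta K cP y) ->
    SC Dmax m tau LP LU pP pU beta K cP xstar
      / SCbar Dmax m tau LP LU pP pU beta K cP ystar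
    <= 1 + d_avg Dmax m * e_max Dmax m K beta pU.
Proof.
  intros K beta _ Hbeta xstar ystar Hnash Hy _.
  assert (HpPU : 0 <= pP <= pU) by lra.
  pose proof (d_avg_ge1 _ _ Hm) as Hdavg.
  assert (Hbeta0 : 0 <= beta) by lra.
  pose proof (ef_bounds _ _ Hm _ _ _ _ Hbeta0 HpPU (proj1 Hnash) K) as He.
  assert (Hemax : 0 <= d_avg Dmax m * e_max Dmax m K beta pU)
    by (apply Rmult_le_pos; lra).
  apply Rdiv_le_of_le_mul with (tau * LU); [nra|lra| |].
  - eapply Rle_trans; [apply (SC_nash_le Dmax m Hm) with cI xi ded Covmax; exact Hnash|].
    apply Rmult_le_compat_l; nra.
  - apply SCbar_ge; try assumption; lra.
Qed.
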